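(* Let $M\in\{0,1\}^{m\times n}$ be the vertex-edge incidence matrix of a simple graph, and let $c\in\mathbb Z^n$. Define $f_{c,M}\colon\mathbb Z^m\to\mathbb Z\cup\{\infty\}$ by \[ f_{c,M}(z)=\min\{c^\top x\mid Mx=z,\ x\in\mathbb Z^n_{\ge0}\}, \] with $f_{c,M}(z)=\infty$ if no such $x$ exists. Then $f_{c,M}$ is SBO jump M-convex.
   Context: $f_{c,M}(z)$ is the minimum cost of a perfect $z$-matching of the graph. For $x,y\in\mathbb Z^m$, write $x\sqsubseteq y$ if $|x_i|\le|y_i|$ and $x_iy_i\ge0$ for all $i$. A $2$-step decomposition of $d\in\mathbb Z^m$ is a multiset of vectors $p^{(1)},\dots,p^{(\ell)}\in\mathbb Z^m$ satisfying: - $\|p^{(k)}\|_1=2$ and $p^{(k)}\sqsubseteq d$ for every $k$; - $d=\sum_k p^{(k)}$. A function $f\colon\mathbb Z^m\to\mathbb Q\cup\{\infty\}$ is SBO jump M-convex if the following holds for every two points $z^{(1)},z^{(2)}$ with $f(z^{(1)}),f(z^{(2)})<\infty$. There must exist a $2$-step decomposition $p^{(1)},\dots,p^{(\ell)}$ of $z^{(2)}-z^{(1)}$ and reals $g^{(1)},\dots,g^{(\ell)}$ such that: - $f(z^{(2)})=f(z^{(1)})+\sum_{k\in[\ell]}g^{(k)}$; - for every $I\subseteq[\ell]$, $f\bigl(z^{(1)}+\sum_{k\in I}p^{(k)}\bigr)\le f(z^{(1)})+\sum_{k\in I}g^{(k)}$. *)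

From Stdlib Require Import ClassicalEpsilon.
From HB Require Import structures.
From mathcomp Require Import all_boot all_order all_algebra.
Set Implicit Arguments. Unset Strict Implicit. Unset Printing Implicit Defensive.
Import Order.TTheory GRing.Theory Num.Theory.
Local Open Scope ring_scope.

(* M is the vertex-edge incidence matrix of a simple graph with m vertices
   and n edges: 0/1 entries, every column has exactly two ones (no loops),
   and the columns are pairwise distinct (no parallel edges). *)
Definition simple_graph_incidence (m n : nat) (M : 'M[int]_(m, n)) : Prop :=
  [/\ (forall i j, M i j = 0 \/ M i j = 1),
      (forall j, #|[set i | M i j == 1]| = 2%N)
    & (forall j1 j2, col j1 M = col j2 M -> j1 = j2)].

Definition feasible (m n : nat) (M : 'M[int]_(m, n)) (z : 'cV[int]_m)
  (x : 'cV[int]_n) : Prop :=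
  M *m x = z /\ (forall j, 0 <= x j 0).

Definition cost (n : nat) (c : 'cV[int]_n) (x : 'cV[int]_n) : int :=
  \sum_j c j 0 * x j 0.

Definition is_min_cost (m n : nat) (M : 'M[int]_(m, n)) (c : 'cV[int]_n)
  (z : 'cV[int]_m) (v : int) : Prop :=
  (exists2 x, feasible M z x & cost c x = v) /\
  (forall x, feasible M z x -> v <= cost c x).

(* f_{c,M} : Z^m -> Q \cup {oo}, with None standing for oo. *)
Definition f_cM (m n : nat) (M : 'M[int]_(m, n)) (c : 'cV[int]_n)
  (z : 'cV[int]_m) : option rat :=
  match excluded_middle_informative (exists v, is_min_cost M c z v) with
  | left H => Some ((proj1_sig (constructive_indefinite_description _ H))%:~R)
  | right _ => None
  end.

Definition sqsub (m : nat) (x y : 'cV[int]_m) : Prop :=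
  forall i, `|x i 0| <= `|y i 0| /\ 0 <= x i 0 * y i 0.

Definition l1norm (m : nat) (x : 'cV[int]_m) : int := \sum_i `|x i 0|.

(* p_1, ..., p_l (a multiset, given as an indexed family) is a 2-step
   decomposition of d. *)
Definition two_step_decomp (m l : nat) (d : 'cV[int]_m)
  (p : 'I_l -> 'cV[int]_m) : Prop :=
  (forall k, l1norm (p k) = 2 /\ sqsub (p k) d) /\ d = \sum_k p k.

Definition SBO_jump_Mconvex (m : nat) (f : 'cV[int]_m -> option rat) : Prop :=
  forall (z1 z2 : 'cV[int]_m) (v1 v2 : rat),
    f z1 = Some v1 -> f z2 = Some v2 ->
    exists (l : nat) (p : 'I_l -> 'cV[int]_m) (g : 'I_l -> rat),
      [/\ two_step_decomp (z2 - z1) p,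
          v2 = v1 + \sum_k g k
        & forall I : {set 'I_l},
            exists2 v, f (z1 + \sum_(k in I) p k) = Some v
                     & v <= v1 + \sum_(k in I) g k].

From Stdlib Require Import ClassicalEpsilon.
From HB Require Import structures.
From mathcomp Require Import all_boot all_order all_algebra zify.
Set Implicit Arguments. Unset Strict Implicit. Unset Printing Implicit Defensive.
Import Order.TTheory GRing.Theory Num.Theory.
Local Open Scope ring_scope.

(* Take optimal points x1, x2 for z1, z2 and split x2 - x1 conformally (no two
   pieces have opposite signs in any coordinate) as r + y_1 + ... + y_l, where
   M r = 0, every M y_k has l1-norm 2, and the M y_k are conformal as well. Then
   the M y_k form a 2-step decomposition of z2 - z1; since the pieces never
   cancel, every x1 + sum_(k in I) y_k stays nonnegative, hence is feasible for
   z1 + sum_(k in I) M y_k; and optimality of x1 and x2 forces c.r = 0, so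
   g_k = c.y_k are the required reals. The decomposition is built by adding one
   unit edge vector at a time: the new edge ab is merged with at most two earlier
   pieces, chosen to cancel its +1 at the endpoints where M (x2 - x1) is
   negative; the merged piece has an image of l1-norm at most 2, hence 0 or 2,
   because every column of M sums to 2. *)

Section Conformal.
Variable k : nat.
Implicit Types (i : 'I_k) (x y z u : 'cV[int]_k) (L S T U : seq 'cV[int]_k).

Definition conformal L : Prop :=
  forall i, {in L, forall y, 0 <= y i 0} \/ {in L, forall y, y i 0 <= 0}.

Lemma conformal_sub L L' : {subset L' <= L} -> conformal L -> conformal L'.
Proof. by move=> sL'L cL i; case: (cL i) => Li; [left | right] => y /sL'L /Li. Qed.

Lemma conformal_opp L : conformal L -> conformal (map -%R L).
Proof.
move=> cL i; case: (cL i) => Li; [right | left] => _ /mapP[y /Li + ->];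
  by rewrite mxE ?oppr_le0 ?oppr_ge0.
Qed.

Lemma conformal_merge x y L : conformal (x :: y :: L) -> conformal (x + y :: L).
Proof.
move=> cxyL i.
have [x_in y_in] : x \in x :: y :: L /\ y \in x :: y :: L by rewrite !inE !eqxx orbT.
have L_in z : z \in L -> z \in x :: y :: L by rewrite !inE => ->; rewrite !orbT.
case: (cxyL i) => xyL; [left | right] => _ /predU1P[-> | /L_in/xyL //]; rewrite mxE.
- by rewrite addr_ge0 ?xyL.
- by move: (xyL x x_in) (xyL y y_in) => /= ? ?; lia.
Qed.

Lemma part_le_sum L y i : {in L, forall z, 0 <= z i 0} -> y \in L ->
  y i 0 <= (\sum_(z <- L) z) i 0.
Proof.
move=> L_ge0 yL; rewrite summxE (big_rem y) //= lerDl big_seq.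
by apply: sumr_ge0 => z /mem_rem; apply: L_ge0.
Qed.

Lemma sum_le_part L y i : {in L, forall z, z i 0 <= 0} -> y \in L ->
  (\sum_(z <- L) z) i 0 <= y i 0.
Proof.
move=> L_le0 yL; rewrite summxE (big_rem y) //= gerDl big_seq.
by apply: sumr_le0 => z /mem_rem; apply: L_le0.
Qed.

Lemma conformal_sum_ge0 L i : conformal L ->
  0 <= (\sum_(y <- L) y) i 0 -> {in L, forall y, 0 <= y i 0}.
Proof.
move=> cL s_ge0; case: (cL i) => // L_le0 y yL.
exact: le_trans s_ge0 (sum_le_part L_le0 yL).
Qed.

Lemma conformal_sum_le0 L i : conformal L ->
  (\sum_(y <- L) y) i 0 <= 0 -> {in L, forall y, y i 0 <= 0}.
Proof.
move=> cL s_le0; case: (cL i) => // L_ge0 y yL.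
exact: le_trans (part_le_sum L_ge0 yL) s_le0.
Qed.

Lemma conformal_sqsub L y : conformal L -> y \in L -> sqsub y (\sum_(z <- L) z).
Proof.
move=> cL yL i; case: (cL i) => Li.
- have y_ge0 := Li y yL; have y_le := part_le_sum Li yL.
  by rewrite !ger0_norm ?mulr_ge0 // (le_trans y_ge0).
- have y_le0 := Li y yL; have le_y := sum_le_part Li yL.
  by rewrite !ler0_norm ?lerN2 ?mulr_le0 // (le_trans le_y).
Qed.

Lemma conformal_absorb S L u : conformal (S ++ L) -> (forall i, 0 <= u i 0) ->
  (forall i, (\sum_(y <- S ++ L) y) i 0 < 0 -> 0 < u i 0 ->
     (\sum_(y <- S) y + u) i 0 <= 0) ->
  conformal (\sum_(y <- S) y + u :: L).
Proof.
move=> cSL u_ge0 absorb i; have SL y : y \in S -> y \in S ++ L by rewrite mem_cat => ->.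
have LSL y : y \in L -> y \in S ++ L by rewrite mem_cat orbC => ->.
have [w_ge0 | w_lt0] := lerP 0 ((\sum_(y <- S ++ L) y) i 0).
  have SL_ge0 := conformal_sum_ge0 cSL w_ge0.
  left=> _ /predU1P[-> | /LSL/SL_ge0 //].
  rewrite mxE summxE addr_ge0 // big_seq.
  by apply: sumr_ge0 => y /SL/SL_ge0.
have SL_le0 := conformal_sum_le0 cSL (ltW w_lt0).
right=> _ /predU1P[-> | /LSL/SL_le0 //].
have [u_gt0 | u_le0] := ltrP 0 (u i 0); first exact: absorb.
have u0 : u i 0 = 0 by apply/le_anti; rewrite u_le0 u_ge0.
by rewrite mxE u0 addr0 summxE big_seq; apply: sumr_le0 => y /SL/SL_le0.
Qed.

Lemma conformal_partial_ge0 U S T x : conformal U -> {subset S ++ T <= U} ->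
  (forall j, 0 <= x j 0) -> (forall j, 0 <= (x + \sum_(y <- S ++ T) y) j 0) ->
  forall j, 0 <= (x + \sum_(y <- S) y) j 0.
Proof.
move=> cU STU x_ge0 xST_ge0 j; move: (xST_ge0 j); rewrite big_cat /= !mxE.
case: (cU j) => Uj; first move=> _.
  rewrite addr_ge0 // summxE big_seq; apply: sumr_ge0 => y yS; apply: Uj.
  by apply: STU; rewrite mem_cat yS.
suff T_le0 : (\sum_(y <- T) y) j 0 <= 0 by move/le_trans; apply; rewrite lerD2l gerDl.
rewrite summxE big_seq; apply: sumr_le0 => y yT; apply: Uj.
by apply: STU; rewrite mem_cat yT orbT.
Qed.

End Conformal.

Section L1norm.
Variable k : nat.
Implicit Types (i : 'I_k) (x y : 'cV[int]_k).

Lemma l1norm_ge0 x : 0 <= l1norm x.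
Proof. exact: sumr_ge0. Qed.

Lemma l1normN x : l1norm (- x) = l1norm x.
Proof. by apply: eq_bigr => i _; rewrite mxE normrN. Qed.

Lemma l1normD x y : l1norm (x + y) <= l1norm x + l1norm y.
Proof. by rewrite -big_split; apply: ler_sum => i _; rewrite mxE ler_normD. Qed.

Lemma l1norm_eq0 x : (l1norm x == 0) = (x == 0).
Proof.
apply/idP/eqP => [|->]; last by rewrite /l1norm big1 // => i _; rewrite mxE.
rewrite psumr_eq0 // => /allP x0; apply/matrixP => i j; rewrite ord1 mxE.
by move: (x0 i (mem_index_enum i)); rewrite /= normr_eq0 => /eqP.
Qed.

Lemma l1norm_delta i : l1norm (delta_mx i 0) = 1.
Proof.
rewrite /l1norm (bigD1 i) //= big1 => [|j /negbTE ji]; rewrite mxE ?ji //.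
by rewrite !eqxx.
Qed.

Lemma l1norm_subDelta x i : 0 < x i 0 -> l1norm (x - delta_mx i 0) = l1norm x - 1.
Proof.
move=> xi_gt0; rewrite /l1norm (bigD1 i) //= [in RHS](bigD1 i) //=.
rewrite (eq_bigr (fun j => `|x j 0|)) => [|j /negbTE ji]; last by rewrite !mxE ji subr0.
have xi_ge1 : 1 <= x i 0 by lia.
rewrite !mxE !eqxx /= [`|x i 0|]ger0_norm ?ltW // ger0_norm ?subr_ge0 //.
by rewrite addrAC.
Qed.

Lemma l1norm_addDelta x i : x i 0 < 0 -> l1norm (x + delta_mx i 0) = l1norm x - 1.
Proof.
move=> xi_lt0; rewrite -l1normN opprD l1norm_subDelta ?l1normN //.
by rewrite mxE oppr_gt0.
Qed.

Lemma l1norm_parity x : exists t, l1norm x = \sum_i x i 0 + 2 * t.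
Proof.
exists (\sum_i Num.max 0 (- x i 0)); rewrite mulr_sumr -big_split.
apply: eq_bigr => i _ /=; case: (lerP 0 (x i 0)) => [x_ge0 | x_lt0].
  by rewrite ger0_norm // max_l ?oppr_le0 // mulr0 addr0.
by rewrite ltr0_norm // max_r ?oppr_ge0 ?ltW //; lia.
Qed.

End L1norm.

(* The only consequence of simplicity that is used: parallel edges are harmless. *)
Definition loopless_incidence m n (M : 'M[int]_(m, n)) : Prop :=
  forall e, exists a b, a != b /\ col e M = delta_mx a 0 + delta_mx b 0.

Lemma simple_graph_loopless m n (M : 'M[int]_(m, n)) :
  simple_graph_incidence M -> loopless_incidence M.
Proof.
case=> M01 two_ones _ e.
have /cards2P[a [b [ab ends]]] : #|[set i | M i e == 1]| == 2%N by rewrite two_ones.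
exists a, b; split => //; apply/matrixP => i j; rewrite ord1 !mxE !andbT.
have := congr1 (fun A : {set 'I_m} => i \in A) ends; rewrite /= !inE.
case: (M01 i e) => ->; first by move/esym/norP => [/negbTE -> /negbTE ->].
by rewrite eqxx => /esym/orP[] /eqP->; rewrite eqxx ?(negbTE ab) // eq_sym (negbTE ab).
Qed.

Section LooplessIncidence.
Variables (m n : nat) (M : 'M[int]_(m, n)).
Hypothesis M_incidence : loopless_incidence M.

Lemma sum_mulmx_incidence (y : 'cV[int]_n) : \sum_i (M *m y) i 0 = 2 * \sum_j y j 0.
Proof.
have col_sum j : \sum_i M i j = 2.
  have [a [b [_ colj]]] := M_incidence j.
  have sum_delta (c : 'I_m) : \sum_i ((i == c)%:R : int) = 1.
    by rewrite (bigD1 c) //= eqxx big1 ?addr0 // => i /negbTE ->.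
  have -> : \sum_i M i j = \sum_i (col j M) i 0 by apply: eq_bigr => i _; rewrite mxE.
  by rewrite colj; under eq_bigr do rewrite !mxE !andbT; rewrite big_split /= !sum_delta.
under eq_bigr do rewrite mxE; rewrite exchange_big mulr_sumr.
by apply: eq_bigr => j _; rewrite -mulr_suml col_sum mulrC.
Qed.

Lemma l1norm_mulmx_eq2 (y : 'cV[int]_n) :
  M *m y != 0 -> l1norm (M *m y) <= 2 -> l1norm (M *m y) = 2.
Proof.
rewrite -l1norm_eq0; have := l1norm_ge0 (M *m y).
by have [t ->] := l1norm_parity (M *m y); rewrite sum_mulmx_incidence; lia.
Qed.

End LooplessIncidence.

Section GraphDecomposition.
Variables (m n : nat) (M : 'M[int]_(m, n)).
Hypothesis M_incidence : loopless_incidence M.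
Implicit Types (d r u y : 'cV[int]_n) (L S : seq 'cV[int]_n).

Definition graph_decomp d r L : Prop :=
  [/\ d = r + \sum_(y <- L) y, conformal (r :: L), M *m r = 0,
      {in L, forall y, l1norm (M *m y) = 2} & conformal [seq M *m y | y <- L]].

Lemma graph_decomp0 : graph_decomp 0 0 [::].
Proof.
split; rewrite ?big_nil ?addr0 ?mulmx0 // => i; left=> y //.
by rewrite inE => /eqP->; rewrite mxE.
Qed.

Lemma graph_decompN d r L :
  graph_decomp d r L -> graph_decomp (- d) (- r) (map -%R L).
Proof.
case=> -> cL Mr0 ML2 cML; split.
- by rewrite big_map sumrN opprD.
- exact: (conformal_opp cL).
- by rewrite mulmxN Mr0 oppr0.
- by move=> _ /mapP[y yL ->]; rewrite mulmxN l1normN ML2.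
- by rewrite -map_comp (eq_map (mulmxN M)) map_comp; apply: conformal_opp.
Qed.

Lemma graph_decomp_insert d r L S L0 u :
  graph_decomp d r L -> perm_eq L (S ++ L0) ->
  conformal (\sum_(y <- S) y + u :: r :: L0) ->
  conformal (M *m (\sum_(y <- S) y + u) :: [seq M *m y | y <- L0]) ->
  l1norm (M *m (\sum_(y <- S) y + u)) <= 2 ->
  exists r' L', graph_decomp (d + u) r' L'.
Proof.
set y := \sum_(z <- S) z + u => -[-> cL Mr0 ML2 cML] LSL0 cy cMy My_le2.
have L0L : {subset L0 <= L} by move=> z zL0; rewrite (perm_mem LSL0) mem_cat zL0 orbT.
have d_split : r + \sum_(z <- L) z + u = r + y + \sum_(z <- L0) z.
  by rewrite (perm_big _ LSL0) big_cat /= /y -!addrA [u + _]addrC.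
have cML0 : conformal [seq M *m z | z <- L0].
  by apply: conformal_sub cML => _ /mapP[z /L0L zL ->]; apply: map_f.
have [My0 | My_neq0] := eqVneq (M *m y) 0.
  exists (r + y), L0; split => //; last by move=> z /L0L/ML2.
  - by apply: conformal_merge; apply: conformal_sub cy => z; rewrite !inE orbCA.
  - by rewrite mulmxDr Mr0 My0 addr0.
exists r, (y :: L0); split => //.
- by rewrite big_cons addrA; exact: d_split.
- by apply: conformal_sub cy => z; rewrite !inE orbCA.
- by move=> z /predU1P[-> | /L0L/ML2 //]; apply: l1norm_mulmx_eq2.
Qed.

Section AddEdgeUnit.
Variables (d r : 'cV[int]_n) (L : seq 'cV[int]_n) (e : 'I_n).
Hypotheses (dec : graph_decomp d r L) (de_ge0 : 0 <= d e 0).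

Let delta_entry k (a i : 'I_k) : (delta_mx a 0 : 'cV[int]_k) i 0 = (i == a)%:R.
Proof. by rewrite mxE eqxx andbT. Qed.

(* The pieces [S] are merged with the new edge [e = ab]; at an endpoint where
   [M d] is negative they must cancel the +1 contributed by [e]. *)
Lemma graph_decomp_absorb a b S L0 :
  a != b -> col e M = delta_mx a 0 + delta_mx b 0 -> perm_eq L (S ++ L0) ->
  ((M *m d) a 0 < 0 -> (M *m \sum_(y <- S) y) a 0 < 0) ->
  ((M *m d) b 0 < 0 -> (M *m \sum_(y <- S) y) b 0 < 0) ->
  l1norm (M *m (\sum_(y <- S) y + delta_mx e 0)) <= 2 ->
  exists r' L', graph_decomp (d + delta_mx e 0) r' L'.
Proof.
move=> ab col_e LSL0 Sa Sb My_le2; have [d_eq cL Mr0 _ cML] := dec.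
apply: (graph_decomp_insert dec LSL0 _ _ My_le2).
  apply: conformal_absorb => [|i|i]; rewrite ?delta_entry ?ler0n //.
    apply: conformal_sub cL => z; rewrite mem_cat !inE (perm_mem LSL0) mem_cat.
    by case/orP => [-> | /predU1P[-> | ->]]; rewrite ?eqxx ?orbT.
  have SrL0 : perm_eq (S ++ r :: L0) (r :: L).
    by rewrite -[r :: L0]cat1s perm_catCA /= perm_cons perm_sym.
  have -> : \sum_(y <- S ++ r :: L0) y = d by rewrite (perm_big _ SrL0) big_cons d_eq.
  by case: eqP => [-> | _]; rewrite ?ltxx // ltNge de_ge0.
have MS : M *m \sum_(y <- S) y = \sum_(z <- [seq M *m y | y <- S]) z.
  by rewrite big_map mulmx_sumr.
rewrite mulmxDr -colE col_e MS; apply: conformal_absorb => [|i|i].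
- by apply: conformal_sub cML => z; rewrite -map_cat (perm_mem (perm_map _ LSL0)).
- by rewrite mxE !delta_entry addr_ge0 ?ler0n.
rewrite -map_cat big_map -(perm_big _ LSL0) -mulmx_sumr.
have -> : \sum_(y <- L) y = d - r by rewrite d_eq addrAC subrr add0r.
rewrite mulmxBr Mr0 subr0 -MS; move: Sa Sb.
move: (M *m d) (M *m \sum_(y <- S) y) => w v Sa Sb; rewrite !mxE !eqxx !andbT.
case: (eqVneq i a) => [-> | _].
  by rewrite (negbTE ab) addr0 mulr1n lezD1 => /Sa.
case: (eqVneq i b) => [-> | _]; last by rewrite add0r ltxx.
by rewrite add0r mulr1n lezD1 => /Sb.
Qed.

Lemma graph_decomp_addDelta_neg a b :
  a != b -> col e M = delta_mx a 0 + delta_mx b 0 -> (M *m d) a 0 < 0 ->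
  exists r' L', graph_decomp (d + delta_mx e 0) r' L'.
Proof.
move=> ab col_e Md_a; have [d_eq _ Mr0 ML2 cML] := dec.
have Md_sum : M *m d = \sum_(z <- [seq M *m y | y <- L]) z.
  by rewrite d_eq mulmxDr Mr0 add0r big_map mulmx_sumr.
have ML_le0 i : (M *m d) i 0 < 0 -> {in L, forall y, (M *m y) i 0 <= 0}.
  rewrite Md_sum => /ltW /(conformal_sum_le0 cML) ML_le0 y yL.
  exact/ML_le0/map_f.
have [y yL My_a] : exists2 y, y \in L & (M *m y) a 0 < 0.
  apply/hasP; apply: contraTT Md_a => /hasPn ML_ge0; rewrite -leNgt Md_sum summxE.
  by rewrite big_map big_seq; apply: sumr_ge0 => z /ML_ge0; rewrite -leNgt.
have Mya_norm : l1norm (M *m y + delta_mx a 0) = 1 by rewrite l1norm_addDelta ?ML2.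
(* [y] cancels the +1 at [a]; at [b] either some other piece [y'] does, or [y]
   itself is negative there whenever [M d] is. *)
have [/hasP[y' y'L My'_b] | /hasPn ML_b] :=
  boolP (has (fun y' => (M *m y') b 0 < 0) (rem y L)).
  apply: (@graph_decomp_absorb a b [:: y; y'] (rem y' (rem y L))) => //.
  - by apply: (perm_trans (perm_to_rem yL)); rewrite /= perm_cons perm_to_rem.
  - move/ML_le0/(_ y' (mem_rem y'L)) => My'_a.
    by rewrite !big_cons big_nil addr0 mulmxDr mxE ltr_wnDr.
  - move/ML_le0/(_ y yL) => My_b.
    by rewrite !big_cons big_nil addr0 mulmxDr mxE ltr_nwDr.
  rewrite !big_cons big_nil addr0 !mulmxDr -colE col_e addrACA.
  apply: le_trans (l1normD _ _) _.
  by rewrite Mya_norm l1norm_addDelta ?ML2 ?(mem_rem y'L).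
apply: (@graph_decomp_absorb a b [:: y] (rem y L)) => //.
- exact: perm_to_rem.
- by rewrite big_cons big_nil addr0.
- move=> Md_b; rewrite big_cons big_nil addr0; apply: le_lt_trans Md_b.
  rewrite Md_sum summxE big_map (perm_big _ (perm_to_rem yL)) big_cons lerDl.
  by rewrite big_seq; apply: sumr_ge0 => z /ML_b; rewrite -leNgt.
rewrite big_cons big_nil addr0 mulmxDr -colE col_e addrA.
apply: le_trans (l1normD _ _) _.
by rewrite Mya_norm l1norm_delta.
Qed.

Lemma graph_decomp_addDelta : exists r' L', graph_decomp (d + delta_mx e 0) r' L'.
Proof.
have [a [b [ab col_e]]] := M_incidence e.
wlog Md_ab : a b ab col_e /
    (M *m d) a 0 < 0 \/ 0 <= (M *m d) a 0 /\ 0 <= (M *m d) b 0.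
  move=> gen; have [Md_a | Md_a] := ltrP ((M *m d) a 0) 0.
    by apply: (gen a b ab col_e); left.
  have [Md_b | Md_b] := ltrP ((M *m d) b 0) 0; last by apply: (gen a b ab col_e); right.
  by apply: (gen b a); rewrite 1?eq_sym 1?addrC //; left.
case: Md_ab => [Md_a | [Md_a Md_b]]; first exact: (graph_decomp_addDelta_neg ab col_e).
apply: (@graph_decomp_absorb a b [::] L) => //; rewrite ?cat0s ?ltNge ?Md_a ?Md_b //.
rewrite big_nil add0r -colE col_e; apply: le_trans (l1normD _ _) _.
by rewrite !l1norm_delta.
Qed.

End AddEdgeUnit.

Lemma graph_decomp_exists d : exists r L, graph_decomp d r L.
Proof.
have [N] := ubnP `|l1norm d|%N; elim: N d => // N IH d lt_dN.
have [j dj | d0] := pickP (fun j => d j 0 != 0); last first.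
  have -> : d = 0 by apply/matrixP => i k; rewrite ord1 mxE; apply/eqP/negbFE/d0.
  by exists 0, [::]; apply: graph_decomp0.
wlog dj_gt0 : d lt_dN dj / 0 < d j 0.
  move=> gen; have [|dj_le0] := ltrP 0 (d j 0); first exact: gen.
  have [|||r [L /graph_decompN]] := gen (- d).
  - by rewrite l1normN.
  - by rewrite mxE oppr_eq0.
  - by rewrite mxE oppr_gt0 lt_neqAle dj.
  by rewrite opprK => decN; exists (- r), (map -%R L).
have [|r [L dec]] := IH (d - delta_mx j 0).
  have := l1norm_ge0 (d - delta_mx j 0).
  by rewrite l1norm_subDelta //; move: lt_dN; lia.
have [|r' [L' dec']] := graph_decomp_addDelta dec (e := j).
  by rewrite !mxE !eqxx /= subr_ge0; lia.
by exists r', L'; rewrite subrK in dec'.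
Qed.

End GraphDecomposition.

Lemma int_lbound_min (P : int -> Prop) (B : int) :
  (exists v, P v) -> (forall v, P v -> B <= v) ->
  exists2 v, P v & forall w, P w -> v <= w.
Proof.
move=> [v0 Pv0] B_le.
pose Q k := if excluded_middle_informative (P (B + k%:Z)) then true else false.
have QP k : reflect (P (B + k%:Z)) (Q k).
  by rewrite /Q; case: excluded_middle_informative => ? /=; constructor.
have /ex_minnP[k /QP Pk k_min] : exists k, Q k.
  by exists `|v0 - B|%N; apply/QP; rewrite gez0_abs ?subr_ge0 ?B_le // subrKC.
exists (B + k%:Z) => // w Pw; rewrite -lerBrDl.
have /k_min : Q `|w - B|%N by apply/QP; rewrite gez0_abs ?subr_ge0 ?B_le // subrKC.
by rewrite -lez_nat gez0_abs ?subr_ge0 ?B_le.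
Qed.

Lemma costB n (c : 'cV[int]_n) : zmod_morphism (cost c).
Proof.
by move=> x y; rewrite /cost -sumrB; apply: eq_bigr => j _; rewrite !mxE mulrBr.
Qed.

HB.instance Definition _ n (c : 'cV[int]_n) :=
  Algebra.isZmodMorphism.Build _ _ (cost c) (costB c).

Section MinCost.
Variables (m n : nat) (M : 'M[int]_(m, n)) (c : 'cV[int]_n).
Hypothesis M_incidence : loopless_incidence M.

Lemma feasible_sum z x : feasible M z x -> \sum_i z i 0 = 2 * \sum_j x j 0.
Proof. by case=> <- _; apply: sum_mulmx_incidence. Qed.

Lemma feasible_cost_lbound z x : feasible M z x ->
  - (\sum_j `|c j 0|) * \sum_i z i 0 <= cost c x.
Proof.
move=> x_feas; have [_ x_ge0] := x_feas.
rewrite mulNr mulr_suml -sumrN; apply: ler_sum => j _.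
have xj_le : x j 0 <= \sum_i z i 0.
  rewrite (feasible_sum x_feas) (bigD1 j) //= mulrDr.
  set rest := \sum_(i | _) _; have : 0 <= rest by apply: sumr_ge0.
  by have := x_ge0 j; lia.
have := x_ge0 j; case: (lerP 0 (c j 0)) => [cj_ge0 | cj_lt0];
  [rewrite ger0_norm | rewrite ltr0_norm]; nia.
Qed.

Lemma is_min_cost_exists z x : feasible M z x -> exists v, is_min_cost M c z v.
Proof.
move=> x_feas; pose P v := exists2 y, feasible M z y & cost c y = v.
have P_lb v : P v -> - (\sum_j `|c j 0|) * \sum_i z i 0 <= v.
  by case=> y y_feas <-; apply: feasible_cost_lbound.
have P_x : P (cost c x) by exists x.
have [_ [y y_feas <-] y_min] := int_lbound_min (ex_intro P _ P_x) P_lb.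
by exists (cost c y); split => [|y' y'_feas]; [exists y | apply: y_min; exists y'].
Qed.

Lemma f_cM_is_min z v : is_min_cost M c z v -> f_cM M c z = Some v%:~R.
Proof.
move=> v_min; rewrite /f_cM.
case: excluded_middle_informative => [ex | []]; last by exists v.
case: constructive_indefinite_description => w /= w_min.
have [[x x_feas <-] x_min] := v_min; have [[y y_feas <-] y_min] := w_min.
by rewrite (@le_anti _ _ (cost c y) (cost c x)) // y_min ?x_min.
Qed.

Lemma f_cM_Some_min z v : f_cM M c z = Some v ->
  exists x, [/\ feasible M z x, v = (cost c x)%:~R &
                forall y, feasible M z y -> cost c x <= cost c y].
Proof.
rewrite /f_cM; case: excluded_middle_informative => // ex [<-].
by case: constructive_indefinite_description => w /= [[x x_feas <-] x_min]; exists x.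
Qed.

Lemma f_cM_le_cost z x : feasible M z x ->
  exists2 v, f_cM M c z = Some v & v <= (cost c x)%:~R.
Proof.
move=> x_feas; have [v [[y y_feas <-] y_min]] := is_min_cost_exists x_feas.
by exists (cost c y)%:~R; [apply: f_cM_is_min; split; first exists y | rewrite ler_int y_min].
Qed.

End MinCost.

Lemma sum_nth_setID k (L : seq 'cV[int]_k) (I : {set 'I_(size L)}) :
  \sum_(y <- L) y =
    \sum_(y <- [seq L`_i | i : 'I_(size L) <- enum I]) y
  + \sum_(y <- [seq L`_i | i : 'I_(size L) <- enum (~: I)]) y.
Proof.
rewrite !big_map !big_enum /= (big_nth 0) big_mkord (bigID (mem I)) /=.
by congr (_ + _); apply: eq_bigl => i; rewrite in_setC.
Qed.

Section OptimalPair.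
Variables (m n : nat) (M : 'M[int]_(m, n)) (c : 'cV[int]_n).
Variables (z1 z2 : 'cV[int]_m) (x1 x2 r : 'cV[int]_n) (L : seq 'cV[int]_n).
Hypotheses (x1_feas : feasible M z1 x1) (x2_feas : feasible M z2 x2).
Hypothesis dec : graph_decomp M (x2 - x1) r L.

Lemma graph_decomp_partial_ge0 S T :
  {subset S ++ T <= r :: L} -> x1 + \sum_(y <- S ++ T) y = x2 ->
  forall j, 0 <= (x1 + \sum_(y <- S) y) j 0.
Proof.
move=> STU ST_x2; have [_ cL _ _ _] := dec.
by apply: (conformal_partial_ge0 cL STU x1_feas.2); rewrite ST_x2; apply: x2_feas.2.
Qed.

Lemma graph_decomp_partial_feasible (I : {set 'I_(size L)}) :
  feasible M (z1 + \sum_(i in I) M *m L`_i) (x1 + \sum_(i in I) L`_i).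
Proof.
split; first by rewrite mulmxDr mulmx_sumr x1_feas.1.
have [d_eq _ _ _ _] := dec.
have -> : \sum_(i in I) L`_i = \sum_(y <- [seq L`_i | i : 'I_(size L) <- enum I]) y.
  by rewrite big_map big_enum.
apply: (graph_decomp_partial_ge0 (T := r :: [seq L`_i | i : 'I_(size L) <- enum (~: I)])).
  move=> y; rewrite mem_cat inE => /or3P[| /eqP-> |]; rewrite ?mem_head //;
    by case/mapP=> i _ ->; rewrite inE mem_nth ?orbT.
rewrite -[RHS](subrKC x1) d_eq; congr (x1 + _).
by rewrite big_cat big_cons /= addrCA -sum_nth_setID.
Qed.

Lemma graph_decomp_kernel_cost0 :
  (forall y, feasible M z1 y -> cost c x1 <= cost c y) ->
  (forall y, feasible M z2 y -> cost c x2 <= cost c y) ->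
  cost c r = 0.
Proof.
move=> x1_min x2_min; have [d_eq _ Mr0 _ _] := dec.
have x2_split : x1 + (r + \sum_(y <- L) y) = x2 by rewrite -d_eq subrKC.
have x1L_eq : x1 + \sum_(y <- L) y = x2 - r.
  by rewrite -x2_split addrCA addrAC subrr add0r.
have /x1_min : feasible M z1 (x1 + r).
  split; first by rewrite mulmxDr Mr0 addr0 x1_feas.1.
  have := @graph_decomp_partial_ge0 [:: r] L (fun _ => id).
  by rewrite big_seq1; apply; rewrite big_cons.
have /x2_min : feasible M z2 (x2 - r).
  split; first by rewrite mulmxBr Mr0 subr0 x2_feas.1.
  rewrite -x1L_eq; apply: (graph_decomp_partial_ge0 (T := [:: r])).
    by move=> y; rewrite mem_cat mem_seq1 inE orbC.
  by rewrite big_cat big_seq1 /= [_ + r]addrC.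
by rewrite !raddfD raddfN /=; lia.
Qed.

Lemma graph_decomp_cost_split : cost c r = 0 ->
  cost c x2 = cost c x1 + \sum_(i < size L) cost c L`_i.
Proof.
have [d_eq _ _ _ _] := dec.
rewrite -[x2](subrKC x1) d_eq !raddfD raddf_sum /= => ->; rewrite add0r.
by rewrite (big_nth 0) big_mkord.
Qed.

Lemma graph_decomp_two_step :
  two_step_decomp (z2 - z1) (fun i : 'I_(size L) => M *m L`_i).
Proof.
have [d_eq _ Mr0 ML2 cML] := dec.
have ->: z2 - z1 = \sum_(y <- [seq M *m y | y <- L]) y.
  by rewrite -x1_feas.1 -x2_feas.1 -mulmxBr d_eq mulmxDr Mr0 add0r big_map mulmx_sumr.
split=> [i | ]; last by rewrite big_map (big_nth 0) big_mkord.
split; first by apply/ML2/mem_nth.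
by apply: conformal_sqsub cML _; apply/map_f/mem_nth.
Qed.

End OptimalPair.

Theorem proposition17 (m n : nat) (M : 'M[int]_(m, n)) (c : 'cV[int]_n) :
  simple_graph_incidence M -> SBO_jump_Mconvex (f_cM M c).
Proof.
move=> /simple_graph_loopless M_incidence z1 z2 v1 v2.
move=> /f_cM_Some_min[x1 [x1_feas -> x1_min]] /f_cM_Some_min[x2 [x2_feas -> x2_min]].
have [r [L dec]] := graph_decomp_exists M_incidence (x2 - x1).
have cost_r := graph_decomp_kernel_cost0 x1_feas x2_feas dec x1_min x2_min.
exists (size L), (fun i => M *m L`_i), (fun i => (cost c L`_i)%:~R); split.
- exact: graph_decomp_two_step x1_feas x2_feas dec.
- by rewrite (graph_decomp_cost_split dec cost_r) intrD; congr (_ + _); apply: mulrz_sumr.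
move=> I; have I_feas := graph_decomp_partial_feasible x1_feas x2_feas dec I.
have [v f_v v_le] := f_cM_le_cost c M_incidence I_feas.
by exists v; rewrite // (le_trans v_le) // raddfD raddf_sum /= intrD lerD2l mulrz_sumr.
Qed.
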